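(* Let $\mathcal{A}$ be a separating union-closed family with base set $[n]$ and height $h=4$, and let $\mathcal{B}=\{B_1,B_2,B_3\}$ be a choice of $\mathcal{B}(\mathcal{A})$ with $|\mathcal{B}|=3$. Suppose $|B|=n$, where $B=b(\mathcal{A}_{<n/2})$. Then for every $A \in \mathcal{A}_{<n/2}$ and every $i \in \{1,2,3\}$ with $|\mathrm{irr}_{\mathcal{B}}(B_i)| > 1$, we have $|A \cap \mathrm{irr}_{\mathcal{B}}(B_i)| \in \{0,\ |\mathrm{irr}_{\mathcal{B}}(B_i)|-1,\ |\mathrm{irr}_{\mathcal{B}}(B_i)|\}$.
   Context: A family of sets $\mathcal{A}$ is union-closed if it is a finite family of distinct finite sets with at least one nonempty member set, and $X,Y\in\mathcal{A}$ implies $X\cup Y\in\mathcal{A}$ (the empty set may be a member). For a family $\mathcal{F}$, $b(\mathcal{F})=\bigcup_{F\in\mathcal{F}}F$; the base set $b(\mathcal{A})$ is denoted $[n]=\{1,\dots,n\}$. $\mathcal{A}$ is separating if for any two distinct $x,y\in[n]$ there is $A\in\mathcal{A}$ containing exactly one of $x,y$. A chain in $\mathcal{A}$ is a subfamily any two distinct members of which are comparable under proper inclusion; the height $h$ of $\mathcal{A}$ is the maximum size of a chain in $\mathcal{A}$. For real $x\ge 0$, $\mathcal{A}_{<x}=\{A\in\mathcal{A} : |A|<x\}$. For $\mathcal{S}\subseteq\mathcal{A}$ and $S\in\mathcal{S}$, $\mathrm{irr}_{\mathcal{S}}(S)=\{s\in S : s\notin b(\mathcal{S}\setminus\{S\})\}$,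 and $\mathcal{S}$ is irredundant if $\mathrm{irr}_{\mathcal{S}}(S)\neq\emptyset$ for every $S\in\mathcal{S}$. With $B=b(\mathcal{A}_{<n/2})$, $\mathcal{B}(\mathcal{A})$ denotes any irredundant subfamily of $\mathcal{A}_{<n/2}$ of minimum size such that $b(\mathcal{B}(\mathcal{A}))=B$. *)

From mathcomp Require Import all_boot.
Set Implicit Arguments. Unset Strict Implicit. Unset Printing Implicit Defensive.

(* Ground set [n] is represented by 'I_n = {0,...,n-1}. A family of sets is
   an F : {set {set 'I_n}}; b(F) is [cover F] (the union of its members). *)

Definition union_closed (n : nat) (F : {set {set 'I_n}}) : Prop :=
  [/\ exists2 X, X \in F & X != set0,
      cover F = [set: 'I_n] &
      forall X Y, X \in F -> Y \in F -> X :|: Y \in F].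

Definition separating (n : nat) (F : {set {set 'I_n}}) : Prop :=
  forall x y : 'I_n, x != y -> exists2 X, X \in F & (x \in X) != (y \in X).

Definition is_chain (n : nat) (C : {set {set 'I_n}}) : bool :=
  [forall X in C, forall Y in C, (X != Y) ==> ((X \proper Y) || (Y \proper X))].

Definition height (n : nat) (F : {set {set 'I_n}}) : nat :=
  \max_(C in powerset F | is_chain C) #|C|.

(* F_{<x} for x = n/2 : members A with |A| < n/2, i.e. 2|A| < n *)
Definition small_half (n : nat) (F : {set {set 'I_n}}) : {set {set 'I_n}} :=
  [set X in F | (#|X|.*2 < n)%N].

Definition irr (n : nat) (S : {set {set 'I_n}}) (X : {set 'I_n}) : {set 'I_n} :=
  [set s in X | s \notin cover (S :\ X)].

Definition irredundant (n : nat) (S : {set {set 'I_n}}) : Prop :=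
  forall X, X \in S -> irr S X != set0.

(* Bf is a choice of B(F): an irredundant subfamily of F_{<n/2} of minimum
   size among those whose union is b(F_{<n/2}). *)
Definition is_Bfam (n : nat) (F Bf : {set {set 'I_n}}) : Prop :=
  [/\ Bf \subset small_half F, irredundant Bf,
      cover Bf = cover (small_half F) &
      forall Bf' : {set {set 'I_n}}, Bf' \subset small_half F -> irredundant Bf' ->
        cover Bf' = cover (small_half F) -> (#|Bf| <= #|Bf'|)%N].

From mathcomp Require Import all_boot zify.

Set Implicit Arguments. Unset Strict Implicit. Unset Printing Implicit Defensive.

(* Suppose 0 < |A ∩ irr(B_i)| < |irr(B_i)| - 1, and let B_j, B_k be the other
   two members of B. A point z of A ∩ irr(B_i) lies outside B_j ∪ B_k, and two
   points x ≠ y of irr(B_i) \ A lie outside B_j ∪ B_k ∪ A. A set C of the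
   family separating x from y contains one of them, say x, and a set D covers y.
   Since B_k has an irredundant point outside B_j, the unions
     B_j ⊂ B_j ∪ B_k ⊂ ... ∪ A ⊂ ... ∪ C ⊂ ... ∪ D
   form a chain of five members of the union-closed family, contradicting h = 4. *)

Section Chains.
Variable n : nat.
Implicit Types (X Y : {set 'I_n}) (C F S : {set {set 'I_n}}).

Lemma chain_card_le_height F C : C \subset F -> is_chain C -> #|C| <= height F.
Proof.
move=> sCF chC.
apply: (leq_bigmax_cond (P := fun C => (C \in powerset F) && is_chain C)).
by rewrite powersetE sCF.
Qed.

Lemma is_chain_setU1 C Y :
  is_chain C -> {in C, forall X, X \proper Y} -> is_chain (Y |: C).
Proof.
move=> /forall_inP chC ltCY; apply/forall_inP => X; rewrite in_setU1.
case/predU1P=> [->|XC]; apply/forall_inP => Z; rewrite in_setU1;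
  case/predU1P=> [->|ZC]; apply/implyP => neqXZ.
- by rewrite eqxx in neqXZ.
- by rewrite ltCY ?orbT.
- by rewrite ltCY.
- by have /forall_inP/(_ Z ZC)/implyP := chC X XC; apply.
Qed.

(* The list is read from its end: every member has a point outside the union
   of the members that follow it. *)
Fixpoint adds_new (s : seq {set 'I_n}) : bool :=
  if s is X :: s' then ~~ (X \subset \bigcup_(Y <- s') Y) && adds_new s'
  else true.

Lemma irr_notin_bigcup S X s e :
  {subset s <= S :\ X} -> e \in irr S X -> e \notin \bigcup_(Y <- s) Y.
Proof.
move=> sub_s; rewrite inE => /andP[_]; apply: contra; rewrite bigcup_seq.
by case/bigcupP=> Y /sub_s SXY eY; apply/bigcupP; exists Y.
Qed.

Lemma irredundant_adds_new S s : irredundant S -> uniq s -> {subset s <= S} -> adds_new s.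
Proof.
move=> S_irr; elim: s => [|X s IH] //= /andP[Xs s_uniq] sub_Xs.
rewrite IH ?andbT => [|//|Y sY]; last by apply: sub_Xs; rewrite inE sY orbT.
have /set0Pn[e eX] := S_irr X (sub_Xs X (mem_head X s)).
apply/subsetPn; exists e; first by case/setIdP: eX.
apply: irr_notin_bigcup eX => Y sY; rewrite !inE sub_Xs ?inE ?sY ?orbT // andbT.
by apply: contraNneq Xs => <-.
Qed.

Section UnionClosed.
Variable F : {set {set 'I_n}}.
Hypothesis F_setU : forall X Y, X \in F -> Y \in F -> X :|: Y \in F.

Lemma bigcup_cons_in X s :
  X \in F -> all (mem F) s -> \bigcup_(Y <- X :: s) Y \in F.
Proof.
elim: s X => [|Y s IH] X FX /=; first by rewrite big_seq1.
by case/andP=> FY Fs; rewrite big_cons F_setU ?IH.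
Qed.

Lemma chain_of_adds_new s : all (mem F) s -> adds_new s ->
  exists C, [/\ C \subset F, is_chain C, #|C| = size s &
                {in C, forall X, X \subset \bigcup_(Y <- s) Y}].
Proof.
elim: s => [|X s IH] /=.
  exists set0; split=> [||//|X]; rewrite ?sub0set ?cards0 ?inE //.
  by apply/forall_inP => X; rewrite inE.
move=> /andP[FX Fs] /andP[newX /(IH Fs)[C [sCF chC cardC subC]]].
set U := \bigcup_(Y <- s) Y in newX subC.
have ltU : U \proper X :|: U := properUr newX.
have FXU : X :|: U \in F by have := bigcup_cons_in FX Fs; rewrite big_cons.
have ltCXU : {in C, forall Y, Y \proper X :|: U}.
  by move=> Y /subC sYU; apply: sub_proper_trans sYU ltU.
exists (X :|: U |: C); rewrite big_cons; split.
- by rewrite subUset sub1set FXU sCF.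
- exact: is_chain_setU1.
- rewrite cardsU1 cardC; case: (boolP (X :|: U \in C)) => // /ltCXU.
  by rewrite properxx.
- by move=> Y; rewrite in_setU1 => /predU1P[->|/ltCXU/proper_sub].
Qed.

Lemma height_ge_adds_new s : all (mem F) s -> adds_new s -> size s <= height F.
Proof.
by move=> Fs /(chain_of_adds_new Fs)[C [sCF chC <- _]]; apply: chain_card_le_height.
Qed.

End UnionClosed.

Section Separating.
Variable F : {set {set 'I_n}}.
Hypotheses (F_cover : cover F = [set: 'I_n]) (F_sep : separating F).

Lemma adds_new_separating s x y :
  x != y -> x \notin \bigcup_(Y <- s) Y -> y \notin \bigcup_(Y <- s) Y ->
  exists C D : {set 'I_n},
    [/\ C \in F, D \in F & adds_new (D :: C :: s) = adds_new s].
Proof.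
move=> neq_xy xU yU; have [C FC sepC] := F_sep neq_xy.
wlog [xC yC] : x y neq_xy xU yU sepC / x \in C /\ y \notin C => [gen|].
  case: (boolP (x \in C)) (sepC) => xC /= yC; first exact: (gen x y).
  by apply: (gen y x); rewrite 1?eq_sym // -[y \in C]negbK.
have /bigcupP[D FD yD] : y \in cover F by rewrite F_cover inE.
exists C, D; split => //=; rewrite big_cons.
have -> : ~~ (C \subset \bigcup_(Y <- s) Y) by apply/subsetPn; exists x.
have -> // : ~~ (D \subset C :|: \bigcup_(Y <- s) Y).
by apply/subsetPn; exists y; rewrite // inE negb_or yC.
Qed.

End Separating.

End Chains.

Theorem propositionH (n : nat) (F Bf : {set {set 'I_n}}) :
  union_closed F -> separating F -> height F = 4 ->
  is_Bfam F Bf -> #|Bf| = 3 ->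
  #|cover (small_half F)| = n ->
  forall A, A \in small_half F ->
  forall Bi, Bi \in Bf -> (1 < #|irr Bf Bi|)%N ->
    let k := #|A :&: irr Bf Bi| in
    k = 0 \/ k = #|irr Bf Bi|.-1 \/ k = #|irr Bf Bi|.
Proof.
move=> [_ F_cover F_setU] F_sep F_height [Bf_small Bf_irr _ _] Bf_card _.
move=> A A_small Bi Bf_i _ k; set I := irr Bf Bi.
have small_F : small_half F \subset F by rewrite /small_half setIdE subsetIl.
have k_le : k <= #|I| by rewrite subset_leq_card ?subsetIr.
suff : ~~ (0 < k < #|I|.-1) by move=> /negP; lia.
apply/negP => /andP[k_gt0 k_lt].
have others : {subset enum (Bf :\ Bi) <= Bf :\ Bi} by move=> Y; rewrite mem_enum.
have others_Bf : {subset enum (Bf :\ Bi) <= Bf} by move=> Y /others/setD1P[].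
set s := A :: enum (Bf :\ Bi).
have size_s : size s = 3.
  by rewrite /= -cardE -Bf_card (cardsD1 Bi Bf) Bf_i.
have s_F : all (mem F) s.
  apply/allP => Y /predU1P[->|/others_Bf BfY]; apply: (subsetP small_F) => //.
  exact: (subsetP Bf_small).
have s_new : adds_new s.
  rewrite /= (irredundant_adds_new Bf_irr) ?enum_uniq // andbT.
  have /set0Pn[z /setIP[zA zI]] : A :&: I != set0 by rewrite -card_gt0.
  by apply/subsetPn; exists z; rewrite // (irr_notin_bigcup others zI).
have [x [y [xIA yIA neq_xy]]] : exists x y, [/\ x \in I :\: A, y \in I :\: A & x != y].
  by apply/card_gt1P; rewrite cardsD setIC -/k; lia.
have s_out e : e \in I :\: A -> e \notin \bigcup_(Y <- s) Y.
  by case/setDP=> eI eA; rewrite big_cons inE negb_or eA (irr_notin_bigcup others eI).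
have [C [D [F_C F_D CD_new]]] :=
  adds_new_separating F_cover F_sep neq_xy (s_out x xIA) (s_out y yIA).
have DCs_F : all (mem F) [:: D, C & s] by rewrite /= F_C F_D.
have := height_ge_adds_new F_setU DCs_F.
rewrite CD_new s_new F_height => /(_ isT).
by change ((size s).+2 <= 4 -> False); rewrite size_s.
Qed.
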